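(* Let $\psi_1,\dots,\psi_L\in\mathbb R^n$ and define $\beta_\ell=n^{-1}\sum_{i=1}^n\nabla f(X_i)\psi_{\ell,i}$ for $\ell=1,\dots,L$. If $\operatorname{span}\{\psi_1,\dots,\psi_L\}=\mathbb R^n$, then there exist vectors $\bar\beta_1,\dots,\bar\beta_{m^*}\in\mathcal B^*=\{\sum_{\ell=1}^Lc_\ell\beta_\ell:\sum_{\ell}|c_\ell|\le1\}$ and constants $\mu_1,\dots,\mu_{m^*}$ (possibly depending on $n$) such that $\Pi^*\preceq\sum_{k=1}^{m^*}\mu_k\bar\beta_k\bar\beta_k^\top$.
   Context: Let $X_1,\dots,X_n\in\mathbb R^d$ and $f(x)=g(\vartheta_1^\top x,\dots,\vartheta_{m^*}^\top x)$ with $g:\mathbb R^{m^*}\to\mathbb R$ differentiable and $\vartheta_1,\dots,\vartheta_{m^*}$ orthonormal in $\mathbb R^d$. The subspace $\mathcal S=\operatorname{span}\{\nabla f(X_1),\dots,\nabla f(X_n)\}$ is assumed to have dimension $m^*$ (i.e. it coincides with the EDR subspace spanned by $\vartheta_1,\dots,\vartheta_{m^*}$), and $\Pi^*$ denotes the orthogonal projector onto $\mathcal S$. $\psi_{\ell,i}$ is the $i$th coordinate of $\psi_\ell$. $A\preceq B$ means $B-A$ is positive semidefinite. *)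

From HB Require Import structures.
From mathcomp Require Import all_boot all_order all_algebra.
From mathcomp Require Import all_classical all_reals all_analysis.
Set Implicit Arguments. Unset Strict Implicit. Unset Printing Implicit Defensive.
Import Order.TTheory GRing.Theory Num.Theory.
Import numFieldNormedType.Exports.
Local Open Scope ring_scope.

Definition grad (R : realType) (d : nat) (f : 'rV[R]_d -> R) (x : 'rV[R]_d)
  : 'rV[R]_d := \row_(j < d) ('D_(delta_mx 0 j) f x).

Definition psd (R : realType) (d : nat) (M : 'M[R]_d) : Prop :=
  M^T = M /\ forall v : 'rV[R]_d, 0 <= (v *m M *m v^T) 0 0.

Definition loewner_le (R : realType) (d : nat) (A B : 'M[R]_d) : Prop :=
  psd (B - A).

Definition orth_proj_onto (R : realType) (n d : nat) (P : 'M[R]_d)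
  (G : 'M[R]_(n, d)) : Prop :=
  P^T = P /\ P *m P = P /\ (P == G)%MS.

Definition beta (R : realType) (n d L : nat) (f : 'rV[R]_d -> R)
  (X : 'I_n -> 'rV[R]_d) (psi : 'I_L -> 'rV[R]_n) (l : 'I_L) : 'rV[R]_d :=
  n%:R^-1 *: \sum_(i < n) (psi l 0 i *: grad f (X i)).

Definition Bstar (R : realType) (d L : nat) (beta : 'I_L -> 'rV[R]_d)
  (v : 'rV[R]_d) : Prop :=
  exists c : 'I_L -> R, \sum_(l < L) `|c l| <= 1 /\
                        v = \sum_(l < L) c l *: beta l.

From HB Require Import structures.
From mathcomp Require Import all_boot all_order all_algebra.
From mathcomp Require Import all_classical all_reals all_analysis.
From mathcomp Require Import lra.
Set Implicit Arguments.
Unset Strict Implicit.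
Unset Printing Implicit Defensive.

Import Order.TTheory GRing.Theory Num.Theory.
Import numFieldNormedType.Exports.
Local Open Scope ring_scope.

(* Only linear algebra is involved; the single-index form of [f] plays no role.
   As the [psi_l] span [R^n], the [beta_l] span the row space of the gradients,
   so some [m] of them form a basis [B] of it, and each lies in [B*]. The
   projector factors as [P = P^T P = B^T (A^T A) B] with [A = P B^+], and for a
   symmetric [M] the form [B^T M B] is dominated in the Loewner order by
   [B^T D B], where [D] is diagonal with [D_kk = sum_j (|M_kj| + |M_jk|)]. *)

Section DiagonalDominance.
Variable R : realDomainType.

Lemma mulr_le_norm_sqrD (a p q : R) : a * p * q <= `|a| * (p ^+ 2 + q ^+ 2).
Proof.
(* [(|a| - a) (p + q)^2 + (|a| + a) (p - q)^2 = 2 |a| (p^2 + q^2) - 4 a p q] *)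
have ha : 0 <= `|a| := normr_ge0 a.
have e1 : 0 <= (`|a| - a) * (p + q) ^+ 2.
  by apply: mulr_ge0; [rewrite subr_ge0 ler_norm | exact: sqr_ge0].
have e2 : 0 <= (`|a| + a) * (p - q) ^+ 2.
  by apply: mulr_ge0; [rewrite -lerBlDr sub0r -normrN ler_norm | exact: sqr_ge0].
have e3 : 0 <= `|a| * (p ^+ 2 + q ^+ 2).
  by apply: mulr_ge0 => //; apply: addr_ge0; exact: sqr_ge0.
nra.
Qed.

Definition diag_dominant m (M : 'M[R]_m) : 'rV[R]_m :=
  \row_k \sum_(j < m) (`|M k j| + `|M j k|).

Lemma quad_form_le_diag_dominant m (M : 'M[R]_m) (w : 'rV[R]_m) :
  (w *m M *m w^T) 0 0 <= (w *m diag_mx (diag_dominant M) *m w^T) 0 0.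
Proof.
have -> : (w *m M *m w^T) 0 0 = \sum_k \sum_j M j k * w 0 j * w 0 k.
  rewrite !mxE; apply: eq_bigr => k _ /=.
  by rewrite !mxE big_distrl; apply: eq_bigr => j _; rewrite [w 0 j * _]mulrC.
have -> : (w *m diag_mx (diag_dominant M) *m w^T) 0 0
    = \sum_k \sum_j `|M j k| * (w 0 j ^+ 2 + w 0 k ^+ 2).
  rewrite mul_mx_diag !mxE.
  under eq_bigr => k _ do rewrite !mxE mulrAC -expr2 mulrC big_distrl /=.
  transitivity (\sum_k \sum_j `|M k j| * w 0 k ^+ 2
                + \sum_k \sum_j `|M j k| * w 0 k ^+ 2).
    rewrite -big_split; apply: eq_bigr => k _ /=.
    by rewrite -big_split; apply: eq_bigr => j _; rewrite mulrDl.
  rewrite [X in X + _]exchange_big -big_split; apply: eq_bigr => k _ /=.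
  by rewrite -big_split; apply: eq_bigr => j _; rewrite mulrDr.
by apply: ler_sum => k _; apply: ler_sum => j _; exact: mulr_le_norm_sqrD.
Qed.

End DiagonalDominance.

Section Loewner.
Variable R : realType.

Lemma psd_congr m d (M : 'M[R]_m) (B : 'M[R]_(m, d)) :
  psd M -> psd (B^T *m M *m B).
Proof.
case=> Msym Mge0; split; first by rewrite !trmx_mul trmxK Msym mulmxA.
by move=> v; have := Mge0 (v *m B^T); rewrite trmx_mul trmxK !mulmxA.
Qed.

Lemma psd_diag_dominant_sub m (M : 'M[R]_m) :
  M^T = M -> psd (diag_mx (diag_dominant M) - M).
Proof.
move=> Msym; split; first by rewrite linearB /= Msym tr_diag_mx.
move=> w; rewrite mulmxBr mulmxBl mxE [X in _ + X]mxE subr_ge0.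
exact: quad_form_le_diag_dominant.
Qed.

Lemma sum_scale_outer_rows m d (c : 'rV[R]_m) (B : 'M[R]_(m, d)) :
  \sum_(k < m) c 0 k *: ((row k B)^T *m row k B) = B^T *m diag_mx c *m B.
Proof.
apply/matrixP => i j; rewrite summxE mul_mx_diag !mxE.
apply: eq_bigr => k _; rewrite !mxE big_ord1 !mxE.
by rewrite mulrA [_ * B k i]mulrC.
Qed.

Lemma loewner_le_congr_diag_dominant m d (M : 'M[R]_m) (B : 'M[R]_(m, d)) :
  M^T = M ->
  loewner_le (B^T *m M *m B)
    (\sum_(k < m) diag_dominant M 0 k *: ((row k B)^T *m row k B)).
Proof.
move=> Msym; rewrite /loewner_le sum_scale_outer_rows -mulmxBl -mulmxBr.
exact/psd_congr/psd_diag_dominant_sub.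
Qed.

End Loewner.

Section RowSpaces.
Variable F : fieldType.

Lemma exists_rowsub_basis L d k (A : 'M[F]_(L, d)) :
  \rank A = k -> exists h : 'I_k -> 'I_L, (A <= rowsub h A)%MS.
Proof. by move<-; exists (maxrankfun A); rewrite eq_maxrowsub. Qed.

Lemma sym_proj_congr_factor r d (P : 'M[F]_d) (B : 'M[F]_(r, d)) :
  P^T = P -> P *m P = P -> (P <= B)%MS ->
  exists2 M : 'M[F]_r, M^T = M & P = B^T *m M *m B.
Proof.
move=> Psym Pidem PB; set A := P *m pinvmx B.
exists (A^T *m A); first by rewrite trmx_mul trmxK.
have AB : A *m B = P by rewrite mulmxKpV.
by rewrite -{1}Pidem -{1}Psym -AB trmx_mul !mulmxA.
Qed.

End RowSpaces.

Lemma Bstar_mem (R : realType) d L (b : 'I_L -> 'rV[R]_d) l : Bstar b (b l).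
Proof.
exists (fun l' => (l' == l)%:R); split.
  rewrite (bigD1 l) //= big1 => [|l' /negbTE ->]; last by rewrite normr0.
  by rewrite eqxx normr1 addr0.
rewrite (bigD1 l) //= eqxx scale1r big1 ?addr0 // => l' /negbTE ->.
by rewrite scale0r.
Qed.

Lemma eqmx_beta_grad (R : realType) n d L (f : 'rV[R]_d -> R)
    (X : 'I_n -> 'rV[R]_d) (psi : 'I_L -> 'rV[R]_n) :
  row_full (\matrix_(l < L) psi l) ->
  (\matrix_(l < L) beta f X psi l :=: \matrix_(i < n) grad f (X i))%MS.
Proof.
have -> : \matrix_(l < L) beta f X psi l
    = n%:R^-1 *: (\matrix_(l < L) psi l *m \matrix_(i < n) grad f (X i)).
  apply/matrixP => l j; rewrite !mxE /beta summxE; congr (_ * _).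
  by apply: eq_bigr => i _; rewrite !mxE.
case: n X psi => [|n] X psi Psi_full.
  by rewrite invr0 scale0r [X in (_ :=: X)%MS]flatmx0; apply/eqmxP; rewrite !sub0mx.
have n_neq0 : n.+1%:R^-1 != 0 :> R by rewrite invr_eq0 pnatr_eq0.
exact: eqmx_trans (eqmx_scale _ n_neq0) (eqmxMfull _ Psi_full).
Qed.

Theorem lemma1 (R : realType) (n d m L : nat)
  (X : 'I_n -> 'rV[R]_d)
  (g : 'rV[R]_m -> R) (Theta : 'M[R]_(d, m)) (f : 'rV[R]_d -> R)
  (hg : forall y : 'rV[R]_m, differentiable g y)
  (hTheta : Theta^T *m Theta = 1%:M)
  (hf : f = fun x => g (x *m Theta))
  (hrank : \rank (\matrix_(i < n) grad f (X i)) = m)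
  (P : 'M[R]_d)
  (hP : orth_proj_onto P (\matrix_(i < n) grad f (X i)))
  (psi : 'I_L -> 'rV[R]_n)
  (hspan : row_full (\matrix_(l < L) psi l)) :
  exists bbar : 'I_m -> 'rV[R]_d,
    (forall k, Bstar (beta f X psi) (bbar k)) /\
    exists mu : 'I_m -> R,
      loewner_le P (\sum_(k < m) mu k *: ((bbar k)^T *m bbar k)).
Proof.
have betaG := eqmx_beta_grad f X hspan.
set Bt := \matrix_(l < L) beta f X psi l in betaG.
have [h Bt_sub] : exists h : 'I_m -> 'I_L, (Bt <= rowsub h Bt)%MS.
  by apply: exists_rowsub_basis; rewrite betaG.
case: hP => Psym [Pidem /eqmxP PG].
have PB : (P <= rowsub h Bt)%MS by apply: submx_trans Bt_sub; rewrite PG betaG.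
have [M Msym ->] := sym_proj_congr_factor Psym Pidem PB.
exists (fun k => row k (rowsub h Bt)); split.
  by move=> k; rewrite row_rowsub rowK; exact: Bstar_mem.
by exists (diag_dominant M 0); exact: loewner_le_congr_diag_dominant.
Qed.
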